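(* Let $R$ be a binary relation on a set $A$ satisfying $\mathbf{WCR}(R)$. Then every $x\in\mathrm{SM}$ is Church–Rosser: for all $b,c\in A$ with $x\to^* b$ and $x\to^* c$ there is $d$ with $b\to^* d$ and $c\to^* d$. (Constructively.)
   Context: Work in constructive (intuitionistic) logic / Martin-Löf type theory without excluded middle or other axioms. Let $R$ be a binary relation on $A$; write $a\to b$ for $R\,a\,b$ and $\to^*$ for its reflexive–transitive closure. $\mathbf{WCR}(R)$: for all $a,b,c$, if $a\to b$ and $a\to c$ then there is $d$ with $b\to^* d$ and $c\to^* d$. $a\in\mathrm{MF}$ iff for all $b$, $a\to^* b$ implies $b\to^* a$. $\mathrm{SM}$ (strongly minimalizing) is defined inductively by two rules: if $a\in\mathrm{MF}$ then $a\in\mathrm{SM}$; and if every $b$ with $a\to b$ is in $\mathrm{SM}$ then $a\in\mathrm{SM}$. *)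

Set Implicit Arguments.

Section Rel.
Variable A : Type.
Variable R : A -> A -> Prop.

Inductive rtc : A -> A -> Prop :=
| rtc_refl : forall a, rtc a a
| rtc_step : forall a b c, R a b -> rtc b c -> rtc a c.

Definition WCR : Prop :=
  forall a b c, R a b -> R a c -> exists d, rtc b d /\ rtc c d.

Definition MF (a : A) : Prop := forall b, rtc a b -> rtc b a.

Inductive SM : A -> Prop :=
| SM_MF : forall a, MF a -> SM a
| SM_step : forall a, (forall b, R a b -> SM b) -> SM a.

Definition CR_at (x : A) : Prop :=
  forall b c, rtc x b -> rtc x c -> exists d, rtc b d /\ rtc c d.
End Rel.

(* Induction on SM.  An element of MF is Church-Rosser because every reduct
   reduces back to it.  Otherwise split both reductions at their first steps
   x -> b1 and x -> c1, join b1 and c1 by WCR at e, and close the diagram in two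
   stages with the induction hypothesis: first at b1 (for b and e), then at c1
   (for c and the resulting common reduct). *)

Section ChurchRosser.
Context {A : Type} {R : A -> A -> Prop}.

Lemma rtc_trans {a b c} : rtc R a b -> rtc R b c -> rtc R a c.
Proof.
  induction 1 as [a | a a' b Haa' _ IH]; intros Hbc; [exact Hbc |].
  exact (rtc_step _ Haa' (IH Hbc)).
Qed.

Lemma MF_CR_at {x} : MF R x -> CR_at R x.
Proof.
  intros Hmf b c Hxb Hxc.
  exists c; split; [exact (rtc_trans (Hmf b Hxb) Hxc) | apply rtc_refl].
Qed.

Lemma WCR_CR_at_step : WCR R ->
  forall x, (forall y, R x y -> CR_at R y) -> CR_at R x.
Proof.
  intros Hwcr x IH b c Hxb Hxc.
  destruct Hxb as [x | x b1 b Hxb1 Hb1b].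
  { exists c; split; [exact Hxc | apply rtc_refl]. }
  destruct Hxc as [x | x c1 c Hxc1 Hc1c].
  { exists b; split; [apply rtc_refl | exact (rtc_step _ Hxb1 Hb1b)]. }
  destruct (Hwcr _ _ _ Hxb1 Hxc1) as [e [Hb1e Hc1e]].
  destruct (IH b1 Hxb1 b e Hb1b Hb1e) as [f [Hbf Hef]].
  destruct (IH c1 Hxc1 f c (rtc_trans Hc1e Hef) Hc1c) as [g [Hfg Hcg]].
  exists g; split; [exact (rtc_trans Hbf Hfg) | exact Hcg].
Qed.

Lemma WCR_SM_CR_at : WCR R -> forall x, SM R x -> CR_at R x.
Proof.
  intros Hwcr x Hsm.
  induction Hsm as [x Hmf | x _ IH].
  - exact (MF_CR_at Hmf).
  - exact (WCR_CR_at_step Hwcr _ IH).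
Qed.

End ChurchRosser.

Theorem mainTheorem9 (A : Type) (R : A -> A -> Prop) (Hwcr : WCR R) :
  forall x : A, SM R x ->
  forall b c : A, rtc R x b -> rtc R x c -> exists d : A, rtc R b d /\ rtc R c d.
Proof.
  exact (WCR_SM_CR_at Hwcr).
Qed.
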